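(* Fix $\eta>0$. Let $\mu^*\in\arg\min_{\mu\in\mathbb{L}_2}\langle C,\mu\rangle$, let $\lambda\in\mathbb{R}^{2md}$, let $\hat\mu=\mathrm{Proj}(\mu^\lambda)\in\mathbb{L}_2$, and let $\delta=\max_{e\in E,i\in e}\|\nu^\lambda_{e,i}\|_1$. Then $$\langle C,\hat\mu-\mu^*\rangle\le16(m+n)d\|C\|_\infty\delta+4\|C\|_\infty\sum_{e\in E,i\in e}\|\nu^\lambda_{e,i}\|_1+\frac{n\log d+2m\log d}{\eta}.$$
   Context: Let $G=(V,E)$ be a finite undirected graph with $n=|V|$, $m=|E|$, every vertex incident to at least one edge; $N_i=\{e\in E:i\in e\}$. $\chi$ is a finite label set with $d=|\chi|\ge2$. Costs $C_i\in\mathbb{R}^\chi$, $C_e\in\mathbb{R}^{\chi^2}$; $\|C\|_\infty$ is the largest absolute entry; for $e=\{i,j\}$ (with fixed orientation), $x_e=(x_i,x_j)$, $(x_e)_i=x_i$. $\langle C,\mu\rangle=\sum_i\sum_xC_i(x)\mu_i(x)+\sum_e\sum_{x_e}C_e(x_e)\mu_e(x_e)$. $\mathbb{L}_2=\{\mu\ge0:\mu_i\in\Sigma^d\ \forall i,\ \sum_{x_e:(x_e)_i=x}\mu_e(x_e)=\mu_i(x)\ \forall e,\,i\in e,\,x\}$, $\Sigma^d$ the probability simplex on $\chi$. For $\lambda\in\mathbb{R}^{2md}$ (indexed by $(e,i,x)$): $\mu^\lambda_i(x)\propto\exp(-\eta C_i(x)+\eta\sum_{e\in N_i}\lambda_{e,i}(x))$,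 $\mu^\lambda_e(x_e)\propto\exp(-\eta C_e(x_e)-\eta\sum_{i\in e}\lambda_{e,i}((x_e)_i))$, each normalized; $S^\lambda_{e,i}(x)=\sum_{x_e:(x_e)_i=x}\mu^\lambda_e(x_e)$; slack $\nu^\lambda_{e,i}=S^\lambda_{e,i}-\mu^\lambda_i$. Rounding map: for $F\in\mathbb{R}_{>0}^{\chi\times\chi}$ and $r,c\in\Sigma^d$, with $r(F),c(F)$ the row/column sums, let $F'=\mathrm{diag}(a)F$ with $a(x)=\min\{r(x)/r(F)(x),1\}$, $F''=F'\mathrm{diag}(b)$ with $b(x)=\min\{c(x)/c(F')(x),1\}$, $\mathrm{err}_r=r-r(F'')$, $\mathrm{err}_c=c-c(F'')$, output $F''+\mathrm{err}_r\mathrm{err}_c^\top/\|\mathrm{err}_c\|_1$ (or $F''$ if $\mathrm{err}_c=0$). $\mathrm{Proj}(\mu^\lambda)$: $\hat\mu_i=\mu^\lambda_i$, and for $e=\{i,j\}$, $\hat\mu_e$ is the rounding of $\mu^\lambda_e$ (rows indexed by $x_i$, columns by $x_j$) with $r=\mu^\lambda_i$, $c=\mu^\lambda_j$. *)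

From HB Require Import structures.
From mathcomp Require Import all_boot all_order all_algebra.
From mathcomp Require Import reals.
From mathcomp Require Import sequences exp.
Set Implicit Arguments. Unset Strict Implicit. Unset Printing Implicit Defensive.
Import Order.TTheory GRing.Theory Num.Theory.
Local Open Scope ring_scope.

Section MRF.
Variables (R : realType) (V E X : finType) (src dst : E -> V).

Definition incident (e : E) (i : V) : bool := (src e == i) || (dst e == i).

Definition simple_graph_cover : Prop :=
  (forall e, src e != dst e) /\
  (forall e e', (src e = src e' /\ dst e = dst e') \/
                (src e = dst e' /\ dst e = src e') -> e = e') /\
  (forall i, exists e, incident e i).

(* <C, mu> ; edge entries indexed (x_src, x_dst) *)
Definition cost (Cv : V -> X -> R) (Ce : E -> X -> X -> R)
  (mv : V -> X -> R) (me : E -> X -> X -> R) : R :=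
  \sum_i \sum_x Cv i x * mv i x + \sum_e \sum_x \sum_y Ce e x y * me e x y.

Definition in_L2 (mv : V -> X -> R) (me : E -> X -> X -> R) : Prop :=
  (forall i x, 0 <= mv i x) /\ (forall e x y, 0 <= me e x y) /\
  (forall i, \sum_x mv i x = 1) /\
  (forall e x, \sum_y me e x y = mv (src e) x) /\
  (forall e y, \sum_x me e x y = mv (dst e) y).

Definition Cinf (Cv : V -> X -> R) (Ce : E -> X -> X -> R) : R :=
  Num.max (\big[Num.max/0]_(i : V) \big[Num.max/0]_(x : X) `|Cv i x|)
          (\big[Num.max/0]_(e : E) \big[Num.max/0]_(x : X)
              \big[Num.max/0]_(y : X) `|Ce e x y|).

(* mu^lambda ; lambda indexed by (e, i, x), only i ∈ e is used *)
Definition mulam_v (eta : R) (Cv : V -> X -> R) (lam : E -> V -> X -> R)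
  (i : V) (x : X) : R :=
  let w := fun x' => expR (- eta * Cv i x' + eta * \sum_(e | incident e i) lam e i x') in
  w x / \sum_x' w x'.

Definition mulam_e (eta : R) (Ce : E -> X -> X -> R) (lam : E -> V -> X -> R)
  (e : E) (x y : X) : R :=
  let w := fun x' y' => expR (- eta * Ce e x' y'
                               - eta * (lam e (src e) x' + lam e (dst e) y')) in
  w x y / \sum_x' \sum_y' w x' y'.

Definition edge_marg (me : E -> X -> X -> R) (e : E) (i : V) (x : X) : R :=
  if src e == i then \sum_y me e x y else \sum_y me e y x.

Definition slack_l1 (mv : V -> X -> R) (me : E -> X -> X -> R) (e : E) (i : V) : R :=
  \sum_x `|edge_marg me e i x - mv i x|.

(* rounding map of F (rows x, columns y) onto marginals r, c *)
Definition round (F : X -> X -> R) (r c : X -> R) : X -> X -> R :=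
  let a := fun x => Num.min (r x / \sum_y F x y) 1 in
  let F1 := fun x y => a x * F x y in
  let b := fun y => Num.min (c y / \sum_x F1 x y) 1 in
  let F2 := fun x y => F1 x y * b y in
  let err_r := fun x => r x - \sum_y F2 x y in
  let err_c := fun y => c y - \sum_x F2 x y in
  let nc := \sum_y `|err_c y| in
  fun x y => if nc == 0 then F2 x y else F2 x y + err_r x * err_c y / nc.

(* Proj(mu): vertex part unchanged, edge part rounded *)
Definition proj_e (mv : V -> X -> R) (me : E -> X -> X -> R) (e : E) : X -> X -> R :=
  round (me e) (mv (src e)) (mv (dst e)).

End MRF.

From HB Require Import structures.
From mathcomp Require Import all_boot all_order all_algebra.
From mathcomp Require Import reals.
From mathcomp Require Import sequences exp.
From mathcomp Require Import lra ring.
Import Order.TTheory GRing.Theory Num.Theory.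
Set Implicit Arguments. Unset Strict Implicit. Unset Printing Implicit Defensive.
Local Open Scope ring_scope.

(* The proof splits [<C, hat mu - mu*>] into a rounding part and a relaxed part.
   - Rounding ([round_l1], [rounding_cost]): the rounding map moves each pairwise
     marginal in l1 by at most [3 alpha + 2 beta], where [alpha], [beta] are its
     row and column marginal errors, i.e. the slacks; the cost is [Cn]-Lipschitz
     in l1 ([cost_sub_le]), giving [4 Cn sum_slack].
   - Relaxed part ([relaxed_gap]): by the Lagrangian identity [reduced_cost_eq],
     [mu^lam] is vertex-wise and edge-wise the Gibbs distribution ([softmax]) of
     costs reduced by [lam], so by the Gibbs variational principle
     [gibbs_variational] it beats, up to [(n ln d + 2 m ln d) / eta], every
     normalised point with the same slacks ([gibbs_gap]).  When [d delta <= 1],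
     such a point lies [2 d delta]-close to [mu*] at every vertex and edge
     ([ComparisonPoint]); otherwise the crude bound [2 Cn (n + m)] suffices. *)

Lemma ler_term_sum (R : numDomainType) (T : finType) (F : T -> R) (t : T) :
  (forall s, 0 <= F s) -> F t <= \sum_s F s.
Proof. by move=> F0; rewrite (bigD1 t) //= lerDl sumr_ge0. Qed.

Lemma sumr_gt0_inhabited (R : numDomainType) (T : finType) (F : T -> R) (t : T) :
  (forall s, 0 < F s) -> 0 < \sum_s F s.
Proof. by move=> F0; apply: lt_le_trans (F0 t) (ler_term_sum _ _) => s; apply/ltW. Qed.

Lemma sumr_const_card (R : numDomainType) (T : finType) (c : R) :
  \sum_(t : T) c = #|T|%:R * c.
Proof. by rewrite sumr_const mulr_natl. Qed.

Section Softmax.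
Variables (R : realType) (T : finType) (eta : R).

Definition softmax (a : T -> R) (t : T) : R :=
  expR (- eta * a t) / \sum_s expR (- eta * a s).

Variable t0 : T.

Lemma softmax_gt0 (a : T -> R) t : 0 < softmax a t.
Proof.
by rewrite divr_gt0 ?expR_gt0 // (sumr_gt0_inhabited t0) // => s; apply: expR_gt0.
Qed.

Lemma softmax_sum1 (a : T -> R) : \sum_t softmax a t = 1.
Proof.
rewrite -mulr_suml mulfV // gt_eqF // (sumr_gt0_inhabited t0) // => s.
exact: expR_gt0.
Qed.

End Softmax.

Lemma ln_le_subr1 (R : realType) (y : R) : 0 < y -> ln y <= y - 1.
Proof. by move=> y0; rewrite lerBrDl -[X in _ <= X](lnK y0) expR_ge1Dx. Qed.

Lemma entropy_le_ln_card (R : realType) (T : finType) (p : T -> R) :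
  (forall t, 0 < p t) -> \sum_t p t = 1 ->
  - \sum_t p t * ln (p t) <= ln #|T|%:R.
Proof.
move=> p0 p1; set N : R := #|T|%:R.
have N0 : 0 < N.
  rewrite ltr0n; have [t _|T0] := pickP (@predT T); first by apply/card_gt0P; exists t.
  by move: p1; rewrite big_pred0 // => /eqP; rewrite eq_sym oner_eq0.
have Np0 t : 0 < N * p t by rewrite mulr_gt0.
suff : \sum_t p t * ln ((N * p t)^-1) <= 0.
  rewrite (eq_bigr (fun t => - (p t * ln (p t)) - p t * ln N)); last first.
    by move=> t _; rewrite lnV ?posrE // lnM ?posrE //; ring.
  by rewrite sumrB -mulr_suml p1 mul1r sumrN subr_le0.
apply: le_trans (_ : \sum_t (N^-1 - p t) <= _).
  apply: ler_sum => t _.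
  have Npinv0 : 0 < (N * p t)^-1 by rewrite invr_gt0.
  apply: le_trans (ler_wpM2l (ltW (p0 t)) (ln_le_subr1 Npinv0)) _.
  by rewrite mulrBr mulr1 invfM mulrCA mulfV ?mulr1 // gt_eqF.
by rewrite sumrB p1 sumr_const_card mulfV ?subrr // gt_eqF.
Qed.

(* Gibbs variational principle: the softmax distribution of [a] minimises the
   [eta]-regularised expected potential, hence beats any distribution [q] on the
   expected potential up to the maximal entropy [ln #|T|] divided by [eta]. *)
Lemma gibbs_variational (R : realType) (T : finType) (eta : R) (t0 : T) (a q : T -> R) :
  0 < eta -> (forall t, 0 <= q t) -> \sum_t q t = 1 ->
  \sum_t a t * softmax eta a t <= \sum_t a t * q t + ln #|T|%:R / eta.
Proof.
move=> eta0 q0 q1; set p := softmax eta a; set Z := \sum_s expR (- eta * a s).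
have Z0 : 0 < Z by rewrite (sumr_gt0_inhabited t0) // => s; apply: expR_gt0.
have p0 t : 0 < p t := softmax_gt0 eta t0 a t.
have p1 : \sum_t p t = 1 := softmax_sum1 eta t0 a.
have a_ln t : a t = - (ln (p t) + ln Z) / eta.
  rewrite /p /softmax lnM ?posrE ?invr_gt0 ?expR_gt0 // lnV ?posrE // expRK.
  by field; rewrite gt_eqF.
have average r : \sum_t r t = 1 ->
    \sum_t a t * r t = (- \sum_t r t * ln (p t) - ln Z) / eta.
  move=> r1; have -> : ln Z = \sum_t r t * ln Z by rewrite -mulr_suml r1 mul1r.
  rewrite -sumrN -sumrB mulr_suml; apply: eq_bigr => t _; rewrite a_ln; ring.
have cross_ge0 : 0 <= - \sum_t q t * ln (p t).
  rewrite oppr_ge0 sumr_le0 // => t _; rewrite mulr_ge0_le0 // ln_le0 //.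
  by rewrite -p1 ler_term_sum // => s; apply/ltW.
rewrite average // average // -mulrDl ler_pM2r ?invr_gt0 //.
have := entropy_le_ln_card p0 p1; lra.
Qed.

Lemma gibbs_variational_pair (R : realType) (T : finType) (eta : R) (t0 : T)
    (a q : T -> T -> R) :
  0 < eta -> (forall x y, 0 <= q x y) -> \sum_x \sum_y q x y = 1 ->
  \sum_x \sum_y a x y * softmax eta (fun p : T * T => a p.1 p.2) (x, y)
   <= \sum_x \sum_y a x y * q x y + 2 * ln #|T|%:R / eta.
Proof.
move=> eta0 q0 q1; have T0 : (0 < #|T|)%N by apply/card_gt0P; exists t0.
have := @gibbs_variational R (T * T)%type eta (t0, t0) (fun p => a p.1 p.2)
  (fun p => q p.1 p.2) eta0 (fun p => q0 p.1 p.2).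
rewrite -(pair_bigA _ (fun x y => q x y)) q1 card_prod natrM lnM ?posrE ?ltr0n //.
move=> /(_ erefl); rewrite !pair_bigA; under eq_bigr do rewrite -surjective_pairing.
by rewrite (mulr_natl _ 2) mulr2n.
Qed.

Section Rounding.
Variables (R : realType) (X : finType).

Lemma clip_l1 (f : X -> R) (r s' : R) :
  (forall x, 0 <= f x) -> \sum_x f x <= s' ->
  \sum_x `|f x - Num.min (r / \sum_y f y) 1 * f x| <= `|s' - r|.
Proof.
move=> f0 le_s; set s := \sum_y f y; set k := Num.min (r / s) 1.
have k1 : k <= 1 by rewrite /k ge_min lexx orbT.
have -> : \sum_x `|f x - k * f x| = (1 - k) * s.
  rewrite mulr_sumr; apply: eq_bigr => x _.
  by rewrite -{1}(mul1r (f x)) -mulrBl ger0_norm // mulr_ge0 ?subr_ge0.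
have [le_rs1|lt_1rs] := leP (r / s) 1; last first.
  by rewrite /k (min_idPr (ltW lt_1rs)) subrr mul0r.
rewrite /k (min_idPl le_rs1).
have [->|s_neq0] := eqVneq s 0; first by rewrite mulr0.
rewrite mulrBl mul1r mulfVK //; apply: le_trans _ (ler_norm _).
by rewrite lerD2r; exact: le_s.
Qed.

Lemma rank_one_l1 (u v : X -> R) : \sum_y `|v y| != 0 ->
  \sum_x \sum_y `|u x * v y / \sum_y' `|v y'| | = \sum_x `|u x|.
Proof.
move=> nv0; set nv := \sum_y' `|v y'|.
have inv_nv : `|nv^-1| = nv^-1 by rewrite ger0_norm // invr_ge0 sumr_ge0.
apply: eq_bigr => x _; under eq_bigr do rewrite !normrM inv_nv -mulrA.
by rewrite -mulr_sumr -mulr_suml mulfV // mulr1.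
Qed.

Lemma round_l1 (F : X -> X -> R) (r c : X -> R) :
  (forall x y, 0 <= F x y) -> (forall x, 0 <= r x) ->
  \sum_x \sum_y `|round F r c x y - F x y|
   <= 3 * \sum_x `|\sum_y F x y - r x| + 2 * \sum_y `|\sum_x F x y - c y|.
Proof.
move=> F0 r0.
(* [F1]: rows scaled down to [r]; [F2]: then columns scaled down to [c];
   [er], [ec]: the remaining marginal deficits, repaired by a rank-one term. *)
pose a x := Num.min (r x / \sum_y F x y) 1.
pose F1 x y := a x * F x y.
pose b y := Num.min (c y / \sum_x F1 x y) 1.
pose F2 x y := F1 x y * b y.
pose er x := r x - \sum_y F2 x y.
pose ec y := c y - \sum_x F2 x y.
have round_eq : round F r c = fun x y =>
    if \sum_y `|ec y| == 0 then F2 x y else F2 x y + er x * ec y / \sum_y `|ec y|.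
  by [].
set al := \sum_x `|_|; set be := \sum_y `|_|.
have al0 : 0 <= al by apply: sumr_ge0.
have be0 : 0 <= be by apply: sumr_ge0.
have a01 x : 0 <= a x <= 1.
  by rewrite ge_min lexx orbT le_min ler01 andbT divr_ge0 ?sumr_ge0.
have F1_le x y : 0 <= F1 x y <= F x y.
  by have /andP[? ?] := a01 x; rewrite mulr_ge0 //= ler_piMl.
have row_step : \sum_x \sum_y `|F x y - F1 x y| <= al.
  by apply: ler_sum => x _; apply: clip_l1.
have col_step : \sum_x \sum_y `|F1 x y - F2 x y| <= be.
  rewrite exchange_big /=; apply: ler_sum => y _.
  under eq_bigr do rewrite /F2 mulrC.
  apply: clip_l1 => [x|]; first by case/andP: (F1_le x y).
  by apply: ler_sum => x _; case/andP: (F1_le x y).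
have scaled : \sum_x \sum_y `|F2 x y - F x y| <= al + be.
  apply: le_trans (_ : \sum_x \sum_y (`|F x y - F1 x y| + `|F1 x y - F2 x y|) <= _).
    apply: ler_sum => x _; apply: ler_sum => y _.
    have -> : F2 x y - F x y = - (F x y - F1 x y) - (F1 x y - F2 x y) by ring.
    by rewrite -[`|F x y - F1 x y|]normrN ler_normB.
  under eq_bigr do rewrite big_split /=.
  by rewrite big_split lerD.
have row_err : \sum_x `|er x| <= al + (al + be).
  apply: le_trans (_ : \sum_x (`|\sum_y F x y - r x| + \sum_y `|F2 x y - F x y|) <= _).
    apply: ler_sum => x _.
    have -> : er x = - (\sum_y F x y - r x) - \sum_y (F2 x y - F x y).
      by rewrite /er sumrB; ring.
    rewrite -[`|\sum_y F x y - r x|]normrN (le_trans (ler_normB _ _)) //.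
    by rewrite lerD2l ler_norm_sum.
  by rewrite big_split lerD.
rewrite round_eq /=; case: eqP => [_|/eqP nc_neq0]; first lra.
apply: le_trans
  (_ : \sum_x \sum_y (`|F2 x y - F x y| + `|er x * ec y / \sum_y `|ec y| |) <= _).
  by apply: ler_sum => x _; apply: ler_sum => y _; rewrite addrAC ler_normD.
under eq_bigr do rewrite big_split /=.
rewrite big_split /= rank_one_l1 //; lra.
Qed.

End Rounding.

Section CostBounds.
Variables (R : realType) (V E X : finType) (Cv : V -> X -> R) (Ce : E -> X -> X -> R).

Local Notation Cn := (Cinf Cv Ce).

Lemma Cinf_ge_vertex i x : `|Cv i x| <= Cn.
Proof.
rewrite /Cinf le_max; apply/orP; left.
by apply: le_trans (le_bigmax _ _ i); apply: le_bigmax.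
Qed.

Lemma Cinf_ge_edge e x y : `|Ce e x y| <= Cn.
Proof.
rewrite /Cinf le_max; apply/orP; right.
apply: le_trans (le_bigmax _ _ e); apply: le_trans (le_bigmax _ _ x).
exact: le_bigmax.
Qed.

Lemma Cinf_ge0 : 0 <= Cn.
Proof. by rewrite /Cinf le_max bigmax_ge_id. Qed.

Lemma cost_sub_le (av bv : V -> X -> R) (ae be : E -> X -> X -> R) :
  cost Cv Ce av ae - cost Cv Ce bv be <=
  Cn * (\sum_i \sum_x `|av i x - bv i x| + \sum_e \sum_x \sum_y `|ae e x y - be e x y|).
Proof.
rewrite /cost opprD addrACA -!sumrB mulrDr !mulr_sumr.
apply: lerD; apply: ler_sum => i _; rewrite -sumrB mulr_sumr; apply: ler_sum => x _.
  rewrite -mulrBr (le_trans (ler_norm _)) // normrM.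
  by rewrite ler_wpM2r ?Cinf_ge_vertex.
rewrite -sumrB mulr_sumr; apply: ler_sum => y _.
rewrite -mulrBr (le_trans (ler_norm _)) // normrM.
by rewrite ler_wpM2r ?Cinf_ge_edge.
Qed.

Lemma cost_sub_le_distributions (av bv : V -> X -> R) (ae be : E -> X -> X -> R) :
  (forall i x, 0 <= av i x) -> (forall i x, 0 <= bv i x) ->
  (forall e x y, 0 <= ae e x y) -> (forall e x y, 0 <= be e x y) ->
  (forall i, \sum_x av i x = 1) -> (forall i, \sum_x bv i x = 1) ->
  (forall e, \sum_x \sum_y ae e x y = 1) -> (forall e, \sum_x \sum_y be e x y = 1) ->
  cost Cv Ce av ae - cost Cv Ce bv be <= Cn * (2 * #|V|%:R + 2 * #|E|%:R).
Proof.
move=> av0 bv0 ae0 be0 av1 bv1 ae1 be1.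
apply: le_trans (cost_sub_le _ _ _ _) _; rewrite ler_wpM2l ?Cinf_ge0 //.
have dist_le (a b : R) : 0 <= a -> 0 <= b -> `|a - b| <= a + b.
  by move=> a0 b0; rewrite (le_trans (ler_normB _ _)) // !ger0_norm.
apply: lerD; rewrite mulr_natr -sumr_const; apply: ler_sum.
  move=> i _; apply: le_trans (_ : \sum_x (av i x + bv i x) <= _).
    by apply: ler_sum => x _; apply: dist_le.
  by rewrite big_split av1 bv1.
move=> e _; apply: le_trans (_ : \sum_x \sum_y (ae e x y + be e x y) <= _).
  by apply: ler_sum => x _; apply: ler_sum => y _; apply: dist_le.
by under eq_bigr do rewrite big_split; rewrite big_split ae1 be1.
Qed.

End CostBounds.

Section Lagrangian.
Variables (R : realType) (V E X : finType) (src dst : E -> V) (lam : E -> V -> X -> R).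

(* Costs reparametrised by the multipliers [lam]: [mu^lam] is exactly the Gibbs
   distribution of these reduced costs, vertex by vertex and edge by edge. *)
Definition reduced_vertex_cost (Cv : V -> X -> R) (i : V) (x : X) : R :=
  Cv i x - \sum_(e | incident src dst e i) lam e i x.

Definition reduced_edge_cost (Ce : E -> X -> X -> R) (e : E) (x y : X) : R :=
  Ce e x y + lam e (src e) x + lam e (dst e) y.

Definition multiplier_term (qv : V -> X -> R) (qe : E -> X -> X -> R) : R :=
  \sum_e (\sum_x lam e (src e) x * (\sum_y qe e x y - qv (src e) x)
        + \sum_y lam e (dst e) y * (\sum_x qe e x y - qv (dst e) y)).

Hypothesis src_neq_dst : forall e, src e != dst e.

Lemma sum_incident (f : E -> V -> R) :
  \sum_i \sum_(e | incident src dst e i) f e i = \sum_e (f e (src e) + f e (dst e)).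
Proof.
under eq_bigr do rewrite big_mkcond /=.
rewrite exchange_big /=; apply: eq_bigr => e _.
rewrite (bigD1 (src e)) //= /incident eqxx /=.
rewrite (bigD1 (dst e)) /=; last by rewrite eq_sym src_neq_dst.
rewrite eqxx orbT big1 ?addr0 // => i /andP [ne_src ne_dst].
by rewrite eq_sym (negPf ne_src) eq_sym (negPf ne_dst).
Qed.

Lemma reduced_cost_eq (Cv : V -> X -> R) (Ce : E -> X -> X -> R)
    (qv : V -> X -> R) (qe : E -> X -> X -> R) :
  cost (reduced_vertex_cost Cv) (reduced_edge_cost Ce) qv qe
  = cost Cv Ce qv qe + multiplier_term qv qe.
Proof.
pose vertex_pairing := \sum_e (\sum_x lam e (src e) x * qv (src e) x
                             + \sum_x lam e (dst e) x * qv (dst e) x).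
pose edge_pairing := \sum_e (\sum_x lam e (src e) x * \sum_y qe e x y
                           + \sum_y lam e (dst e) y * \sum_x qe e x y).
have vertex_part : \sum_i \sum_x reduced_vertex_cost Cv i x * qv i x
    = \sum_i \sum_x Cv i x * qv i x - vertex_pairing.
  have incid := sum_incident (fun e i => \sum_x lam e i x * qv i x).
  rewrite /= in incid; rewrite /vertex_pairing -incid -sumrB.
  apply: eq_bigr => i _; rewrite exchange_big /= -sumrB; apply: eq_bigr => x _.
  by rewrite /reduced_vertex_cost mulrBl mulr_suml.
have edge_part : \sum_e \sum_x \sum_y reduced_edge_cost Ce e x y * qe e x y
    = \sum_e \sum_x \sum_y Ce e x y * qe e x y + edge_pairing.
  rewrite -big_split /=; apply: eq_bigr => e _.
  rewrite /reduced_edge_cost; under eq_bigr do under eq_bigr do rewrite !mulrDl.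
  under eq_bigr do rewrite !big_split /=; rewrite !big_split /= -addrA.
  congr (_ + (_ + _)); first by apply: eq_bigr => x _; rewrite mulr_sumr.
  by rewrite exchange_big; apply: eq_bigr => y _; rewrite mulr_sumr.
have multiplier_eq : multiplier_term qv qe = edge_pairing - vertex_pairing.
  rewrite /multiplier_term -sumrB; apply: eq_bigr => e _.
  under eq_bigr do rewrite mulrBr.
  under [X in _ + X]eq_bigr do rewrite mulrBr.
  rewrite !sumrB; ring.
by rewrite /cost vertex_part edge_part multiplier_eq; ring.
Qed.

End Lagrangian.

Section GibbsMarginals.
Variables (R : realType) (V E X : finType) (src dst : E -> V).
Variables (eta : R) (Cv : V -> X -> R) (Ce : E -> X -> X -> R) (lam : E -> V -> X -> R).

Lemma mulam_v_softmax i x :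
  mulam_v src dst eta Cv lam i x
  = softmax eta (reduced_vertex_cost src dst lam Cv i) x.
Proof.
rewrite /mulam_v /softmax /reduced_vertex_cost; congr (expR _ / _); first ring.
by apply: eq_bigr => x' _; congr expR; ring.
Qed.

Lemma mulam_e_softmax e x y :
  mulam_e src dst eta Ce lam e x y
  = softmax eta (fun p : X * X => reduced_edge_cost src dst lam Ce e p.1 p.2) (x, y).
Proof.
rewrite /mulam_e /softmax /reduced_edge_cost pair_bigA /=; congr (expR _ / _); first ring.
by apply: eq_bigr => p _; congr expR; ring.
Qed.

End GibbsMarginals.

(* Normalising the outer product of two slack vectors shifted by their common
   bound [delta]: the row sums of [(delta + u) (delta + v)^T / (#|X| delta)] are
   [delta + u] as soon as [v] has zero sum (for [delta = 0] both sides vanish). *)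
Lemma outer_row_sum (R : realType) (X : finType) (delta u : R) (v : X -> R) :
  (0 < #|X|)%N -> `|u| <= delta -> \sum_y v y = 0 ->
  \sum_y (delta + u) * (delta + v y) / (#|X|%:R * delta) = delta + u.
Proof.
move=> X_gt0 u_le v_sum0; have [delta0|delta_neq0] := eqVneq delta 0.
  have -> : u = 0 by apply/normr0_eq0/eqP; rewrite eq_le normr_ge0 -delta0 u_le.
  by rewrite delta0 !add0r big1 // => y _; rewrite !mul0r.
rewrite -mulr_suml -mulr_sumr big_split /= sumr_const_card v_sum0 addr0.
by rewrite mulfK // mulf_neq0 // pnatr_eq0 -lt0n.
Qed.

Section ComparisonPoint.
Variables (R : realType) (V E X : finType) (src dst : E -> V).
Variables (msv : V -> X -> R) (mse : E -> X -> X -> R).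
Variables (ns nd : E -> X -> R) (delta : R).

Local Notation eps := (#|X|%:R * delta).

(* A normalised nonnegative pseudo-marginal whose marginalisation slacks are the
   prescribed [ns] (towards [src]) and [nd] (towards [dst]): shrink [mu*] by
   [1 - eps] and spread the shifted slacks as an outer product. *)
Definition comparison_v (i : V) (x : X) : R := (1 - eps) * msv i x + delta.

Definition comparison_e (e : E) (x y : X) : R :=
  (1 - eps) * mse e x y + (delta + ns e x) * (delta + nd e y) / eps.

Hypothesis ms_L2 : in_L2 src dst msv mse.
Hypothesis X_gt0 : (0 < #|X|)%N.
Hypothesis delta_ge0 : 0 <= delta.
Hypothesis eps_le1 : eps <= 1.
Hypothesis ns_sum0 : forall e, \sum_x ns e x = 0.
Hypothesis nd_sum0 : forall e, \sum_y nd e y = 0.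
Hypothesis ns_le : forall e x, `|ns e x| <= delta.
Hypothesis nd_le : forall e y, `|nd e y| <= delta.

Let shifted_ge0 (w : R) : `|w| <= delta -> 0 <= delta + w.
Proof. by rewrite ler_norml; lra. Qed.

Let eps_ge0 : 0 <= eps. Proof. by rewrite mulr_ge0. Qed.

Let outer_col_sum e y :
  \sum_x (delta + ns e x) * (delta + nd e y) / eps = delta + nd e y.
Proof.
by under eq_bigr do rewrite [_ * (delta + nd e y)]mulrC; apply: outer_row_sum.
Qed.

Lemma comparison_v_ge0 i x : 0 <= comparison_v i x.
Proof. by case: ms_L2 => msv0 _; rewrite addr_ge0 // mulr_ge0 // subr_ge0. Qed.

Lemma comparison_e_ge0 e x y : 0 <= comparison_e e x y.
Proof.
case: ms_L2 => _ [mse0 _].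
by rewrite addr_ge0 ?mulr_ge0 ?invr_ge0 ?subr_ge0 ?shifted_ge0.
Qed.

Lemma comparison_v_sum1 i : \sum_x comparison_v i x = 1.
Proof.
case: ms_L2 => _ [_ [msv1 _]].
by rewrite big_split /= -mulr_sumr msv1 sumr_const_card; ring.
Qed.

Lemma comparison_row_slack e x :
  \sum_y comparison_e e x y - comparison_v (src e) x = ns e x.
Proof.
case: ms_L2 => _ [_ [_ [mse_row _]]].
by rewrite big_split /= -mulr_sumr mse_row outer_row_sum // /comparison_v; ring.
Qed.

Lemma comparison_col_slack e y :
  \sum_x comparison_e e x y - comparison_v (dst e) y = nd e y.
Proof.
case: ms_L2 => _ [_ [_ [_ mse_col]]].
by rewrite big_split /= -mulr_sumr mse_col outer_col_sum /comparison_v; ring.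
Qed.

Lemma comparison_e_sum1 e : \sum_x \sum_y comparison_e e x y = 1.
Proof.
rewrite (eq_bigr (fun x => comparison_v (src e) x + ns e x)); last first.
  by move=> x _; rewrite -(comparison_row_slack e x); ring.
by rewrite big_split /= comparison_v_sum1 ns_sum0 addr0.
Qed.

Lemma comparison_v_dist i : \sum_x `|comparison_v i x - msv i x| <= 2 * eps.
Proof.
case: ms_L2 => msv0 [_ [msv1 _]].
apply: le_trans (_ : \sum_x (delta + eps * msv i x) <= _).
  apply: ler_sum => x _.
  have -> : comparison_v i x - msv i x = delta - eps * msv i x.
    by rewrite /comparison_v; ring.
  by rewrite (le_trans (ler_normB _ _)) // !ger0_norm ?mulr_ge0.
by rewrite big_split /= -mulr_sumr msv1 sumr_const_card; lra.
Qed.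

Lemma comparison_e_dist e :
  \sum_x \sum_y `|comparison_e e x y - mse e x y| <= 2 * eps.
Proof.
case: ms_L2 => _ [mse0 [msv1 [mse_row _]]].
pose outer x y := (delta + ns e x) * (delta + nd e y) / eps.
apply: le_trans (_ : \sum_x \sum_y (outer x y + eps * mse e x y) <= _).
  apply: ler_sum => x _; apply: ler_sum => y _.
  have -> : comparison_e e x y - mse e x y = outer x y - eps * mse e x y.
    by rewrite /comparison_e /outer; ring.
  by rewrite (le_trans (ler_normB _ _)) // !ger0_norm ?mulr_ge0 ?invr_ge0 ?shifted_ge0.
under eq_bigr do rewrite big_split /= -mulr_sumr outer_row_sum // mse_row.
by rewrite !big_split /= -mulr_sumr msv1 ns_sum0 sumr_const_card; lra.
Qed.

Lemma comparison_cost (Cv : V -> X -> R) (Ce : E -> X -> X -> R) :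
  cost Cv Ce comparison_v comparison_e - cost Cv Ce msv mse
  <= 2 * eps * Cinf Cv Ce * (#|V|%:R + #|E|%:R).
Proof.
apply: le_trans (cost_sub_le _ _ _ _ _ _) _.
have -> : 2 * eps * Cinf Cv Ce * (#|V|%:R + #|E|%:R)
    = Cinf Cv Ce * (\sum_(i : V) 2 * eps + \sum_(e : E) 2 * eps).
  by rewrite !sumr_const_card; ring.
rewrite ler_wpM2l ?Cinf_ge0 // lerD // ler_sum // => [i|e] _.
  exact: comparison_v_dist.
exact: comparison_e_dist.
Qed.

End ComparisonPoint.

Lemma in_L2_edge_sum1 (R : realType) (V E X : finType) (src dst : E -> V)
    (qv : V -> X -> R) (qe : E -> X -> X -> R) :
  in_L2 src dst qv qe -> forall e, \sum_x \sum_y qe e x y = 1.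
Proof.
by case=> _ [_ [qv1 [qe_row _]]] e; under eq_bigr do rewrite qe_row; apply: qv1.
Qed.

Section RelaxedGap.
Variables (R : realType) (V E X : finType) (src dst : E -> V).
Variables (Cv : V -> X -> R) (Ce : E -> X -> X -> R) (eta : R) (lam : E -> V -> X -> R).
Hypothesis src_neq_dst : forall e, src e != dst e.
Hypothesis X_gt0 : (0 < #|X|)%N.
Hypothesis eta_gt0 : 0 < eta.

Local Notation mv := (mulam_v src dst eta Cv lam).
Local Notation me := (mulam_e src dst eta Ce lam).
Local Notation Cn := (Cinf Cv Ce).
Local Notation n := (#|V|%:R : R).
Local Notation m := (#|E|%:R : R).
Local Notation d := (#|X|%:R : R).
Local Notation entropy_term := ((n * ln d + 2 * m * ln d) / eta).

Let x0 : X := enum_val (Ordinal X_gt0).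

Lemma mulam_v_gt0 i x : 0 < mv i x.
Proof. by rewrite mulam_v_softmax (softmax_gt0 _ x0). Qed.

Lemma mulam_e_gt0 e x y : 0 < me e x y.
Proof. by rewrite mulam_e_softmax (softmax_gt0 _ (x0, x0)). Qed.

Lemma mulam_v_sum1 i : \sum_x mv i x = 1.
Proof. by under eq_bigr do rewrite mulam_v_softmax; apply: softmax_sum1. Qed.

Lemma mulam_e_sum1 e : \sum_x \sum_y me e x y = 1.
Proof.
under eq_bigr do under eq_bigr do rewrite mulam_e_softmax.
by rewrite pair_bigA; under eq_bigr do rewrite -surjective_pairing; apply: softmax_sum1.
Qed.

Definition src_slack (e : E) (x : X) : R := \sum_y me e x y - mv (src e) x.
Definition dst_slack (e : E) (y : X) : R := \sum_x me e x y - mv (dst e) y.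

Lemma slack_l1_src e : slack_l1 src mv me e (src e) = \sum_x `|src_slack e x|.
Proof. by rewrite /slack_l1 /edge_marg eqxx. Qed.

Lemma slack_l1_dst e : slack_l1 src mv me e (dst e) = \sum_y `|dst_slack e y|.
Proof. by rewrite /slack_l1 /edge_marg (negPf (src_neq_dst e)). Qed.

Lemma src_slack_sum0 e : \sum_x src_slack e x = 0.
Proof. by rewrite sumrB mulam_e_sum1 mulam_v_sum1 subrr. Qed.

Lemma dst_slack_sum0 e : \sum_y dst_slack e y = 0.
Proof. by rewrite sumrB exchange_big /= mulam_e_sum1 mulam_v_sum1 subrr. Qed.

Local Notation max_slack := (\big[Num.max/0]_(e : E)
  Num.max (slack_l1 src mv me e (src e)) (slack_l1 src mv me e (dst e))).

Lemma max_slack_ge0 : 0 <= max_slack.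
Proof. exact: bigmax_ge_id. Qed.

Lemma src_slack_le_max e x : `|src_slack e x| <= max_slack.
Proof.
apply: le_trans (_ : slack_l1 src mv me e (src e) <= _).
  by rewrite slack_l1_src (ler_term_sum (F := fun x => `|src_slack e x|)).
by rewrite (bigD1 e) //= !le_max lexx.
Qed.

Lemma dst_slack_le_max e y : `|dst_slack e y| <= max_slack.
Proof.
apply: le_trans (_ : slack_l1 src mv me e (dst e) <= _).
  by rewrite slack_l1_dst (ler_term_sum (F := fun y => `|dst_slack e y|)).
by rewrite (bigD1 e) //= !le_max lexx orbT.
Qed.

Lemma rounding_cost :
  cost Cv Ce mv (proj_e src dst mv me) - cost Cv Ce mv me
  <= 4 * Cn * \sum_e (slack_l1 src mv me e (src e) + slack_l1 src mv me e (dst e)).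
Proof.
apply: le_trans (cost_sub_le _ _ _ _ _ _) _.
rewrite big1 ?add0r => [|i _]; last by rewrite big1 // => x _; rewrite subrr normr0.
rewrite [4 * Cn]mulrC -mulrA ler_wpM2l ?Cinf_ge0 // mulr_sumr.
apply: ler_sum => e _.
have := round_l1 (mv (dst e)) (fun x y => ltW (mulam_e_gt0 e x y))
  (fun x => ltW (mulam_v_gt0 (src e) x)).
rewrite -/(proj_e src dst mv me e) slack_l1_src slack_l1_dst => /le_trans; apply.
have : 0 <= \sum_x `|src_slack e x| by apply: sumr_ge0.
have : 0 <= \sum_y `|dst_slack e y| by apply: sumr_ge0.
rewrite /src_slack /dst_slack; lra.
Qed.

(* Dual step: among all normalised pseudo-marginals with the same slacks as
   [mu^lam], the Gibbs point [mu^lam] is optimal up to the entropy term, since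
   the multiplier term of the Lagrangian identity is the same for both. *)
Lemma gibbs_gap (qv : V -> X -> R) (qe : E -> X -> X -> R) :
  (forall i x, 0 <= qv i x) -> (forall e x y, 0 <= qe e x y) ->
  (forall i, \sum_x qv i x = 1) -> (forall e, \sum_x \sum_y qe e x y = 1) ->
  (forall e x, \sum_y qe e x y - qv (src e) x = src_slack e x) ->
  (forall e y, \sum_x qe e x y - qv (dst e) y = dst_slack e y) ->
  cost Cv Ce mv me - cost Cv Ce qv qe <= entropy_term.
Proof.
move=> qv0 qe0 qv1 qe1 q_src q_dst.
have same_multiplier :
    multiplier_term src dst lam mv me = multiplier_term src dst lam qv qe.
  apply: eq_bigr => e _; congr (_ + _); apply: eq_bigr => x _.
    by rewrite q_src.
  by rewrite q_dst.
have := reduced_cost_eq lam src_neq_dst Cv Ce mv me.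
have := reduced_cost_eq lam src_neq_dst Cv Ce qv qe.
rewrite /cost same_multiplier.
have vertex_gibbs : \sum_i \sum_x reduced_vertex_cost src dst lam Cv i x * mv i x
    <= \sum_i \sum_x reduced_vertex_cost src dst lam Cv i x * qv i x + n * (ln d / eta).
  rewrite -sumr_const_card -big_split; apply: ler_sum => i _.
  under eq_bigr do rewrite mulam_v_softmax.
  exact: gibbs_variational.
have edge_gibbs : \sum_e \sum_x \sum_y reduced_edge_cost src dst lam Ce e x y * me e x y
    <= \sum_e \sum_x \sum_y reduced_edge_cost src dst lam Ce e x y * qe e x y
       + m * (2 * ln d / eta).
  rewrite -sumr_const_card -big_split; apply: ler_sum => e _.
  under eq_bigr do under eq_bigr do rewrite mulam_e_softmax.
  exact: gibbs_variational_pair.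
have -> : entropy_term = n * (ln d / eta) + m * (2 * ln d / eta) by ring.
lra.
Qed.

(* If [d delta <= 1]
   we compare with the point of [ComparisonPoint], which shares the slacks of
   [mu^lam]; otherwise the crude bound [2 Cn (n + m)] already suffices. *)
Lemma relaxed_gap (msv : V -> X -> R) (mse : E -> X -> X -> R) (delta : R) :
  in_L2 src dst msv mse -> 0 <= delta ->
  (forall e x, `|src_slack e x| <= delta) -> (forall e y, `|dst_slack e y| <= delta) ->
  cost Cv Ce mv me - cost Cv Ce msv mse
  <= 16 * (m + n) * d * Cn * delta + entropy_term.
Proof.
move=> ms_L2 delta_ge0 src_le dst_le.
have Cn_ge0 := Cinf_ge0 Cv Ce.
have d_ge0 : 0 <= d := ler0n _ _.
have entropy_ge0 : 0 <= entropy_term.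
  have lnd_ge0 : 0 <= ln d by rewrite ln_ge0 // ler1n.
  by apply: divr_ge0; rewrite ?addr_ge0 ?mulr_ge0 ?ler0n // ltW.
have -> : 16 * (m + n) * d * Cn * delta = 16 * (d * delta * (Cn * (n + m))) by ring.
have scale_ge0 : 0 <= Cn * (n + m) by rewrite mulr_ge0 ?addr_ge0 ?ler0n.
have [small|large] := leP (d * delta) 1.
  have gap_q := gibbs_gap (comparison_v_ge0 ms_L2 delta_ge0 small)
    (comparison_e_ge0 ms_L2 delta_ge0 small src_le dst_le)
    (comparison_v_sum1 delta ms_L2)
    (comparison_e_sum1 ms_L2 X_gt0 src_slack_sum0 dst_slack_sum0 src_le)
    (comparison_row_slack ms_L2 X_gt0 dst_slack_sum0 src_le)
    (comparison_col_slack ms_L2 X_gt0 src_slack_sum0 dst_le).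
  have close_q := comparison_cost ms_L2 X_gt0 delta_ge0 src_slack_sum0
    dst_slack_sum0 src_le dst_le Cv Ce.
  rewrite (_ : 2 * (d * delta) * Cn * (n + m) = 2 * (d * delta * (Cn * (n + m))))
    in close_q; last by ring.
  have : 0 <= d * delta * (Cn * (n + m)) by apply: mulr_ge0 => //; apply: mulr_ge0.
  lra.
case: (ms_L2) => msv0 [mse0 [msv1 _]].
have := cost_sub_le_distributions Cv Ce (fun i x => ltW (mulam_v_gt0 i x)) msv0
  (fun e x y => ltW (mulam_e_gt0 e x y)) mse0 mulam_v_sum1 msv1 mulam_e_sum1
  (in_L2_edge_sum1 ms_L2).
have : Cn * (n + m) * 1 <= Cn * (n + m) * (d * delta) by rewrite ler_wpM2l // ltW.
rewrite mulr1 [d * delta * _]mulrC; lra.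
Qed.

End RelaxedGap.

Theorem proposition4 (R : realType) (V E X : finType) (src dst : E -> V)
  (Cv : V -> X -> R) (Ce : E -> X -> X -> R) (eta : R)
  (msv : V -> X -> R) (mse : E -> X -> X -> R) (lam : E -> V -> X -> R) :
  simple_graph_cover src dst ->
  (2 <= #|X|)%N ->
  0 < eta ->
  in_L2 src dst msv mse ->
  (forall mv me, in_L2 src dst mv me ->
     cost Cv Ce msv mse <= cost Cv Ce mv me) ->
  let n : R := #|V|%:R in
  let m : R := #|E|%:R in
  let d : R := #|X|%:R in
  let mv := mulam_v src dst eta Cv lam in
  let me := mulam_e src dst eta Ce lam in
  let hat_e := proj_e src dst mv me in
  let delta := \big[Num.max/0]_(e : E)
                 Num.max (slack_l1 src mv me e (src e)) (slack_l1 src mv me e (dst e)) in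
  let sum_slack := \sum_(e : E) (slack_l1 src mv me e (src e) + slack_l1 src mv me e (dst e)) in
  let Cn := Cinf Cv Ce in
  cost Cv Ce mv hat_e - cost Cv Ce msv mse
    <= 16 * (m + n) * d * Cn * delta + 4 * Cn * sum_slack
       + (n * ln d + 2 * m * ln d) / eta.
Proof.
move=> [src_neq_dst _] X_ge2 eta_gt0 ms_L2 _; cbv zeta.
have X_gt0 : (0 < #|X|)%N by apply: leq_trans X_ge2.
have rounding_le := rounding_cost Cv Ce eta lam src_neq_dst X_gt0.
have relaxed_le := relaxed_gap src_neq_dst X_gt0 eta_gt0 ms_L2
  (max_slack_ge0 src dst Cv Ce eta lam)
  (src_slack_le_max src dst Cv Ce eta lam) (dst_slack_le_max Cv Ce eta lam src_neq_dst).
lra.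
Qed.
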